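(* For the $n$-sun $S_n$, $n\ge 3$: $b(S_3)=1$, $b(S_n)=2$ for all $n\ge 4$, and $b^m(S_n)=2$ for all $n\ge 3$.
   Context: For $n\ge 3$, the $n$-sun $S_n$ is the graph with vertex set $\{x_1,\dots,x_n,y_1,\dots,y_n\}$ and edge set consisting of all edges $\{x_i,x_j\}$ for $1\le i<j\le n$, the edges $\{x_i,y_i\},\{x_{i+1},y_i\}$ for $1\le i<n$, and the edges $\{x_1,y_n\},\{x_n,y_n\}$. An EPG representation of a graph is a set of paths on a rectangular grid (sequences of grid points joined consecutively by grid edges), one per vertex, such that two vertices are adjacent iff their paths share a grid edge. A bend is a point of a path where a horizontal and a vertical grid edge of the path meet; a path is monotonic if it is ascending in both columns and rows. $B_k$ ($B_k^m$) is the class of graphs having an EPG representation in which every path has at most $k$ bends (and is monotonic). The bend number $b(G)$ is the smallest $k\in\mathbb{N}$ with $G\in B_k$, and the monotonic bend number $b^m(G)$ is the smallest $k\in\mathbb{N}$ with $G\in B_k^m$. *)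

From mathcomp Require Import all_boot.
Set Implicit Arguments. Unset Strict Implicit. Unset Printing Implicit Defensive.

(* Grid points: (column, row) in nat * nat (every finite rectangular grid
   embeds, up to translation). *)
Definition point := (nat * nat)%type.

Definition grid_adj (a b : point) : bool :=
  ((a.1 == b.1) && ((a.2.+1 == b.2) || (b.2.+1 == a.2))) ||
  ((a.2 == b.2) && ((a.1.+1 == b.1) || (b.1.+1 == a.1))).

Definition grid_path (s : seq point) : bool := sorted grid_adj s && uniq s.

Definition horiz (a b : point) : bool := a.2 == b.2.

Fixpoint bends (s : seq point) : nat :=
  match s with
  | a :: ((b :: c :: _) as t) => (horiz a b != horiz b c) + bends t
  | _ => 0
  end.

Definition monotonic (s : seq point) : bool :=
  sorted (fun a b : point => (b == (a.1.+1, a.2)) || (b == (a.1, a.2.+1))) s.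

Definition path_edges (s : seq point) : seq (point * point) := zip s (behead s).

Definition same_edge (e f : point * point) : bool :=
  ((e.1 == f.1) && (e.2 == f.2)) || ((e.1 == f.2) && (e.2 == f.1)).

Definition share_edge (s t : seq point) : bool :=
  has (fun e => has (same_edge e) (path_edges t)) (path_edges s).

Definition EPG_rep (V : finType) (adj : rel V) (P : V -> seq point) : Prop :=
  (forall v, grid_path (P v)) /\
  (forall u v, u != v -> adj u v = share_edge (P u) (P v)).

Definition in_B (k : nat) (V : finType) (adj : rel V) : Prop :=
  exists P : V -> seq point, EPG_rep adj P /\ (forall v, bends (P v) <= k).

Definition in_Bm (k : nat) (V : finType) (adj : rel V) : Prop :=
  exists P : V -> seq point,
    EPG_rep adj P /\ (forall v, bends (P v) <= k /\ monotonic (P v)).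

Definition bend_number (V : finType) (adj : rel V) (k : nat) : Prop :=
  in_B k adj /\ (forall j, j < k -> ~ in_B j adj).

Definition mono_bend_number (V : finType) (adj : rel V) (k : nat) : Prop :=
  in_Bm k adj /\ (forall j, j < k -> ~ in_Bm j adj).

(* The n-sun: inl i = x_(i+1), inr i = y_(i+1) (0-indexed);
   x's form a clique, y_i is adjacent to x_i and x_(i+1 mod n). *)
Definition sun_adj (n : nat) (u v : 'I_n + 'I_n) : bool :=
  match u, v with
  | inl i, inl j => i != j
  | inl i, inr k => (val i == val k) || (val i == k.+1 %% n)
  | inr k, inl i => (val i == val k) || (val i == k.+1 %% n)
  | inr _, inr _ => false
  end.
Arguments sun_adj n : clear implicits.

From mathcomp Require Import all_boot zify.
From Stdlib Require Import ZArith Lia Classical IndefiniteDescription.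
Set Implicit Arguments. Unset Strict Implicit. Unset Printing Implicit Defensive.

(* A grid path with at most one bend is an L-shape: a horizontal and a
   vertical arm meeting at a corner, and two such paths share a grid edge iff
   their horizontal arms or their vertical arms overlap on a common line.
   In an L-shape representation of the sun the clique [x_0 .. x_(n-1)] has,
   up to transposition, all its horizontal arms on one row, and some window of
   columns lies in all of them.  A [y] sharing a horizontal edge with an [x]
   lies entirely left or right of the window, since otherwise it would meet
   every [x]; so at most two [y]'s do.  Of two consecutive [y]'s at least one
   does, since otherwise both would meet the vertical arm of their common
   neighbour, which only one [y] can.  This is impossible for [n >= 5].  For
   [n = 4] the window shrinks to a single column, along which the two [y]'s
   without horizontal contact collide; for [n = 3] two [x]'s are forced to
   turn into that column in opposite vertical directions, which the sun
   forbids once the [x]-paths are straight or monotonic.  Conversely,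
   staircases with two bends represent every sun monotonically, and [S_3]
   has an explicit representation with one bend. *)


(** * Paths with at most one bend *)

Lemma grid_adjP (p q : point) : grid_adj p q <->
  (p.1 = q.1 /\ (p.2.+1 = q.2 \/ q.2.+1 = p.2)) \/
  (p.2 = q.2 /\ (p.1.+1 = q.1 \/ q.1.+1 = p.1)).
Proof.
rewrite /grid_adj; split.
- by move=> /orP [/andP [/eqP h /orP [/eqP h'|/eqP h']] | /andP [/eqP h /orP [/eqP h'|/eqP h']]]; lia.
- by case=> [[h [h'|h']]|[h [h'|h']]]; rewrite h h' !eqxx /= ?orbT.
Qed.

Lemma grid_adj_neq (p q : point) : grid_adj p q -> q <> p.
Proof. by case: p => a b; case: q => c d /grid_adjP /= h [e1 e2]; lia. Qed.

(* A unit edge is identified by its orientation ([true] for horizontal) and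
   its lower-left endpoint. *)
Definition edge_key (e : point * point) : bool * nat * nat :=
  if e.1.2 == e.2.2 then (true, minn e.1.1 e.2.1, e.1.2)
  else (false, e.1.1, minn e.1.2 e.2.2).

Definition edge_keys (s : seq point) := map edge_key (path_edges s).

Lemma same_edge_key (e f : point * point) : grid_adj e.1 e.2 -> grid_adj f.1 f.2 ->
  same_edge e f = (edge_key e == edge_key f).
Proof.
case: e => [[a b] [c d]]; case: f => [[a' b'] [c' d']] /= /grid_adjP /= h1 /grid_adjP /= h2.
rewrite /same_edge /edge_key /= !xpair_eqE.
by case: (b =P d) => e1; case: (b' =P d') => e2; rewrite /= ?xpair_eqE /=; lia.
Qed.

Lemma path_edges_adj s e : sorted grid_adj s -> e \in path_edges s -> grid_adj e.1 e.2.
Proof.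
elim: s => [|a [|b s] IH] //= /andP [ab Hs].
by rewrite /path_edges /= inE => /orP [/eqP -> //|]; apply: IH.
Qed.

Lemma share_edge_keys s t : sorted grid_adj s -> sorted grid_adj t ->
  share_edge s t = has (mem (edge_keys t)) (edge_keys s).
Proof.
move=> Hs Ht; rewrite /share_edge /edge_keys has_map.
apply: eq_in_has => e He /=.
rewrite (@eq_in_has _ _ (fun f => edge_key e == edge_key f)); last first.
  by move=> f Hf; apply: same_edge_key; [apply: path_edges_adj Hs He | apply: path_edges_adj Ht Hf].
by rewrite -has_pred1 has_map; apply: eq_has => f /=; rewrite eq_sym.
Qed.

Lemma mem_edge_keys_cons k p p' s :
  k \in edge_keys (p :: p' :: s) <-> k == edge_key (p, p') \/ k \in edge_keys (p' :: s).
Proof. by rewrite -[edge_keys _]/(edge_key (p, p') :: _) inE; split => /orP. Qed.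

Lemma mem_cons_iff (z p : point) s : z \in p :: s <-> z = p \/ z \in s.
Proof. by rewrite inE; split => [/orP [/eqP|]|[->|->]]; rewrite ?eqxx ?orbT; auto. Qed.

Definition aligned (u v : point) : Prop := u.1 = v.1 \/ u.2 = v.2.

Definition on_seg (u v z : point) : Prop :=
  (u.1 = v.1 /\ z.1 = u.1 /\ minn u.2 v.2 <= z.2 <= maxn u.2 v.2) \/
  (u.2 = v.2 /\ z.2 = u.2 /\ minn u.1 v.1 <= z.1 <= maxn u.1 v.1).

Definition hseg (u v : point) x y : Prop :=
  u.2 = v.2 /\ y = u.2 /\ minn u.1 v.1 <= x < maxn u.1 v.1.
Definition vseg (u v : point) x y : Prop :=
  u.1 = v.1 /\ x = u.1 /\ minn u.2 v.2 <= y < maxn u.2 v.2.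

Lemma on_seg_adj (p q z : point) : grid_adj p q -> on_seg p q z <-> z = p \/ z = q.
Proof.
case: p => a b; case: q => c d; case: z => u v /grid_adjP /= h; rewrite /on_seg /=.
split; last by case=> [[-> ->]|[-> ->]]; lia.
move=> H; have [[-> ->]|[-> ->]] : (u = a /\ v = b) \/ (u = c /\ v = d) by lia.
- by left.
- by right.
Qed.

Lemma on_seg_l u v : aligned u v -> on_seg u v u.
Proof. by rewrite /aligned /on_seg; lia. Qed.

Lemma on_seg_r u v : aligned u v -> on_seg u v v.
Proof. by rewrite /aligned /on_seg; lia. Qed.

Lemma on_seg_pt (u z : point) : on_seg u u z <-> z = u.
Proof.
case: u => a b; case: z => c d; rewrite /on_seg /=; split; last by case=> -> ->; lia.
by move=> H; have [-> ->] : c = a /\ d = b by lia.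
Qed.

Lemma hseg_pt u x y : ~ hseg u u x y. Proof. by rewrite /hseg; lia. Qed.
Lemma vseg_pt u x y : ~ vseg u u x y. Proof. by rewrite /vseg; lia. Qed.

Lemma edge_key_adj (p q : point) x y : grid_adj p q ->
  ((true, x, y) == edge_key (p, q) <-> hseg p q x y) /\
  ((false, x, y) == edge_key (p, q) <-> vseg p q x y).
Proof.
case: p => a b; case: q => c d /grid_adjP /= h.
rewrite /edge_key /hseg /vseg /=.
by case: (b =P d) => e; rewrite /= xpair_eqE /= ?xpair_eqE /=; split; split; lia.
Qed.

Lemma monotonic_step (p q : point) :
  (q == (p.1.+1, p.2)) || (q == (p.1, p.2.+1)) -> p.1 <= q.1 /\ p.2 <= q.2.
Proof. by case: q => c d; rewrite !xpair_eqE /=; lia. Qed.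

(* [k] is the corner of the L-shaped path [p :: s]. *)
Record lpath (p : point) (s : seq point) (k : point) : Prop := LPath {
  lpath_shape : (p.2 = k.2 /\ k.1 = (last p s).1) \/ (p.1 = k.1 /\ k.2 = (last p s).2);
  lpath_points : forall z, z \in p :: s <-> on_seg p k z \/ on_seg k (last p s) z;
  lpath_hkeys : forall x y, (true, x, y) \in edge_keys (p :: s) <->
    hseg p k x y \/ hseg k (last p s) x y;
  lpath_vkeys : forall x y, (false, x, y) \in edge_keys (p :: s) <->
    vseg p k x y \/ vseg k (last p s) x y;
  lpath_head : s != [::] -> on_seg p k (head p s) /\ k <> p;
  lpath_straight : bends (p :: s) = 0 -> k = last p s;
  lpath_monotonic : monotonic (p :: s) ->
    [/\ p.1 <= k.1, p.2 <= k.2, k.1 <= (last p s).1 & k.2 <= (last p s).2] }.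

Lemma point_neq (p q : point) : p <> q -> p.1 <> q.1 \/ p.2 <> q.2.
Proof.
case: p q => a b [c d] /= ne; case: (a =P c) => [eac | ]; last by left.
by right => ebd; apply: ne; rewrite eac ebd.
Qed.

Lemma lpath_nil p : lpath p [::] p.
Proof.
split => //=.
- by left.
- move=> z; rewrite mem_seq1 on_seg_pt; split => [/eqP|[|]] ->; by [left|].
- by move=> x y; split => // -[] /hseg_pt.
- by move=> x y; split => // -[] /vseg_pt.
Qed.

Lemma lpath_edge p q : grid_adj p q -> lpath p [:: q] q.
Proof.
move=> adj; split => /=.
- by move: adj; case: p => a b; case: q => c d /grid_adjP /=; lia.
- move=> z; rewrite mem_cons_iff mem_seq1 on_seg_pt on_seg_adj //.
  by split => [[|/eqP]|[[|]|]] ->; rewrite ?eqxx; auto.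
- move=> x y; rewrite mem_seq1 (proj1 (edge_key_adj x y adj)).
  by have := @hseg_pt q x y; tauto.
- move=> x y; rewrite mem_seq1 (proj2 (edge_key_adj x y adj)).
  by have := @vseg_pt q x y; tauto.
- by move=> _; split; [apply/on_seg_adj => //; right | apply: grid_adj_neq].
- by [].
- by rewrite /monotonic /= andbT => /monotonic_step [? ?]; split.
Qed.

Lemma turn_shape (p p' p'' q : point) :
  grid_adj p p' -> grid_adj p' p'' -> horiz p p' != horiz p' p'' -> aligned p' q ->
  on_seg p' q p'' -> (p.2 = p'.2 /\ p'.1 = q.1) \/ (p.1 = p'.1 /\ p'.2 = q.2).
Proof.
case: p => a b; case: p' => c d; case: p'' => e f; case: q => g h.
rewrite /horiz /aligned /on_seg /= => /grid_adjP /= h1 /grid_adjP /= h2.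
by case: eqP; case: eqP => //= *; lia.
Qed.

Lemma lpath_cons_turn p p' p'' s :
  grid_adj p p' -> grid_adj p' p'' -> horiz p p' != horiz p' p'' ->
  lpath p' (p'' :: s) (last p'' s) -> lpath p (p' :: p'' :: s) p'.
Proof.
move=> adj adj' turn [shape pts hk vk hd _ mon] /=.
have [on'' _] := hd isT; rewrite /= in on'' shape.
have al : aligned p' (last p'' s) by rewrite /aligned; lia.
split => /=.
- exact: turn_shape adj adj' turn al on''.
- move=> z; rewrite mem_cons_iff pts (@on_seg_pt (last p'' s) z) (on_seg_adj z adj).
  split.
  + by case=> [->|[h|->]]; [left; left | right | right; apply: on_seg_r].
  + by case=> [[->|->]|h]; [left | right; left; apply: on_seg_l | right; left].
- move=> x y; rewrite mem_edge_keys_cons hk.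
  by have := edge_key_adj x y adj; have := @hseg_pt (last p'' s) x y; tauto.
- move=> x y; rewrite mem_edge_keys_cons vk.
  by have := edge_key_adj x y adj; have := @vseg_pt (last p'' s) x y; tauto.
- by move=> _; split; [apply/on_seg_adj => //; right | apply: grid_adj_neq].
- by rewrite turn.
- rewrite /monotonic /= => /andP [/monotonic_step [s1 s2] /mon [m1 m2 m3 m4]].
  by split; first [exact: leq_trans m1 m3 | exact: leq_trans m2 m4 | done].
Qed.

Definition step_towards (p p' k : point) : Prop :=
  (p.2 = p'.2 /\ p'.2 = k.2 /\
    (p.1.+1 = p'.1 /\ p'.1 <= k.1 \/ p'.1.+1 = p.1 /\ k.1 <= p'.1)) \/
  (p.1 = p'.1 /\ p'.1 = k.1 /\
    (p.2.+1 = p'.2 /\ p'.2 <= k.2 \/ p'.2.+1 = p.2 /\ k.2 <= p'.2)).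

Lemma straight_step_towards (p p' p'' k : point) :
  grid_adj p p' -> grid_adj p' p'' -> horiz p p' = horiz p' p'' -> aligned p' k ->
  on_seg p' k p'' -> ~ on_seg p' k p -> step_towards p p' k.
Proof.
case: p => a b; case: p' => c d; case: p'' => e f; case: k => g h.
rewrite /horiz /aligned /on_seg /step_towards /= => /grid_adjP /= h1 /grid_adjP /= h2.
move=> hb al on'' off.
have hor : b = d <-> d = f by move: hb; case: eqP; case: eqP => ? ? //; lia.
case: h1 => [[e1 [e2|e2]]|[e1 [e2|e2]]]; case: h2 => [[e3 [e4|e4]]|[e3 [e4|e4]]];
  try by exfalso; clear -hor e1 e2 e3 e4; lia.
all: subst; lia.
Qed.

Lemma on_seg_step p p' k z : step_towards p p' k ->
  on_seg p k z <-> z = p \/ on_seg p' k z.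
Proof.
case: p => a b; case: p' => c d; case: k => g h; case: z => u v.
rewrite /step_towards /on_seg pair_equal_spec /=.
by case=> [[<- [<- [[<- ?]|[? ?]]]]|[<- [<- [[<- ?]|[? ?]]]]]; lia.
Qed.

Lemma hseg_step p p' k x y : step_towards p p' k ->
  hseg p k x y <-> hseg p p' x y \/ hseg p' k x y.
Proof.
case: p => a b; case: p' => c d; case: k => g h.
by rewrite /step_towards /hseg /=; lia.
Qed.

Lemma vseg_step p p' k x y : step_towards p p' k ->
  vseg p k x y <-> vseg p p' x y \/ vseg p' k x y.
Proof.
case: p => a b; case: p' => c d; case: k => g h.
by rewrite /step_towards /vseg /=; lia.
Qed.

Lemma lpath_cons_straight p p' p'' s k :
  grid_adj p p' -> grid_adj p' p'' -> horiz p p' = horiz p' p'' ->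
  p \notin p' :: p'' :: s -> lpath p' (p'' :: s) k -> lpath p (p' :: p'' :: s) k.
Proof.
move=> adj adj' straight fresh [shape pts hk vk hd str mon] /=.
have [on'' nkp'] := hd isT; rewrite [last _ (_ :: _)]/= in shape pts hk vk str mon.
have al : aligned p' k by case: shape => -[]; [right | left].
have st : step_towards p p' k.
  apply: straight_step_towards adj adj' straight al on'' _.
  by move=> onp; move/negP: fresh; apply; apply/(pts p); left.
split => /=.
- by move: st shape (point_neq nkp'); rewrite /step_towards; lia.
- by move=> z; rewrite mem_cons_iff pts (on_seg_step z st); tauto.
- move=> x y; rewrite mem_edge_keys_cons hk (hseg_step x y st).
  by have := edge_key_adj x y adj; tauto.
- move=> x y; rewrite mem_edge_keys_cons vk (vseg_step x y st).
  by have := edge_key_adj x y adj; tauto.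
- move=> _; split; first by apply/(on_seg_step _ st); right; apply: on_seg_l.
  by move=> ekp; move: st; rewrite ekp /step_towards; lia.
- by rewrite straight eqxx.
- rewrite /monotonic /= => /andP [/monotonic_step [s1 s2] /mon [m1 m2 *]].
  by split; first [exact: leq_trans s1 m1 | exact: leq_trans s2 m2 | done].
Qed.

Lemma lpath_exists p s : grid_path (p :: s) -> bends (p :: s) <= 1 -> exists k, lpath p s k.
Proof.
elim: s p => [|p' s IH] p; first by exists p; apply: lpath_nil.
move=> gp hb; move: gp; rewrite /grid_path /= => /andP [/andP [adj sorted_s] /andP [fresh uniq_s]].
case: s IH sorted_s uniq_s fresh hb => [|p'' s] IH sorted_s uniq_s fresh.
  by exists p'; apply: lpath_edge.
have gp : grid_path (p' :: p'' :: s) by apply/andP.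
have adj' : grid_adj p' p'' by case/andP: sorted_s.
have -> : bends [:: p, p', p'' & s] = (horiz p p' != horiz p' p'') + bends (p' :: p'' :: s)
  by [].
case: (boolP (horiz p p' != horiz p' p'')) => [turn | /negPn /eqP straight].
- rewrite add1n ltnS leqn0 => /eqP hb0.
  have [k L] : exists k, lpath p' (p'' :: s) k by apply: IH gp _; rewrite hb0.
  have ek := lpath_straight L hb0; rewrite ek in L.
  by exists p'; apply: lpath_cons_turn adj adj' turn L.
- rewrite add0n => hb.
  have [k L] := IH p' gp hb.
  by exists k; apply: lpath_cons_straight.
Qed.

(** * L-shape representations of suns *)

Open Scope Z_scope.

(* The edge set of a path with at most one bend: the horizontal unit edges
   [(x, row)] with [hlo <= x < hhi] and the vertical ones [(col, y)] with
   [vlo <= y < vhi]. *)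
Record lshape := LShape { row : Z; hlo : Z; hhi : Z; col : Z; vlo : Z; vhi : Z }.

Definition hshare p q :=
  row p = row q /\ hlo p < hhi q /\ hlo q < hhi p /\ hlo p < hhi p /\ hlo q < hhi q.
Definition vshare p q :=
  col p = col q /\ vlo p < vhi q /\ vlo q < vhi p /\ vlo p < vhi p /\ vlo q < vhi q.
Definition lshare p q := hshare p q \/ vshare p q.

Definition cornered p := hlo p < hhi p -> vlo p < vhi p ->
  (col p = hlo p \/ col p = hhi p) /\ (row p = vlo p \/ row p = vhi p).
Definition ascending p := hlo p < hhi p -> vlo p < vhi p ->
  (col p = hhi p /\ vlo p = row p) \/ (col p = hlo p /\ vhi p = row p).

Definition transpose p := LShape (col p) (vlo p) (vhi p) (row p) (hlo p) (hhi p).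

Ltac lshape_lia :=
  unfold lshare, cornered, ascending, transpose in *; unfold hshare, vshare in *;
  simpl in *; lia.

Lemma lshare_transpose p q : lshare (transpose p) (transpose q) <-> lshare p q.
Proof. by lshape_lia. Qed.

Lemma cornered_transpose p : cornered p -> cornered (transpose p).
Proof. by lshape_lia. Qed.

Lemma ascending_transpose p : ascending p -> ascending (transpose p).
Proof. by lshape_lia. Qed.

Lemma vshare_nested a b p q : vshare a p -> vshare b q -> col p = col q ->
  vlo p = vlo q \/ vhi p = vhi q -> ~ vshare a b -> vshare a q \/ vshare b p.
Proof. by lshape_lia. Qed.

Section SunShapes.
Variables (I : Type) (s : I -> I).

Definition sun_nbr k i := i = k \/ i = s k.

Record sun_rep (X Y : I -> lshape) : Prop := SunRep {
  sun_xx : forall i j, i <> j -> lshare (X i) (X j);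
  sun_yx : forall k i, lshare (Y k) (X i) <-> sun_nbr k i;
  sun_yy : forall k l, k <> l -> ~ lshare (Y k) (Y l);
  sun_xc : forall i, cornered (X i);
  sun_yc : forall k, cornered (Y k) }.

Lemma sun_rep_transpose X Y : sun_rep X Y ->
  sun_rep (fun i => transpose (X i)) (fun k => transpose (Y k)).
Proof.
case=> xx yx yy xc yc; split.
- by move=> i j ij; apply/lshare_transpose/xx.
- by move=> k i; rewrite lshare_transpose.
- by move=> k l kl; rewrite lshare_transpose; apply: yy.
- by move=> i; apply/cornered_transpose.
- by move=> k; apply/cornered_transpose.
Qed.

Record long_orbits : Prop := LongOrbits {
  orbit_inj : injective s;
  orbit_neq1 : forall k, s k <> k;
  orbit_neq2 : forall k, s (s k) <> k }.

Hypothesis Hs : long_orbits.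

Lemma sun_nbr_diff k k' : k <> k' -> exists2 j, sun_nbr k j & ~ sun_nbr k' j.
Proof.
case: Hs => inj s1 s2 kk'.
case: (classic (k = s k')) => [e|ne]; last by exists k; [left | case].
exists (s k); first by right.
by case=> [e2|/inj //]; apply: (s2 k'); rewrite -e e2.
Qed.

Lemma sun_nbr_s2 k : ~ sun_nbr k (s (s k)).
Proof. by case: Hs => inj s1 s2 [e | /inj e]; [apply: (s2 k) | apply: (s1 k)]. Qed.

Lemma succ_neq k : k <> s k.
Proof. exact/nesym/(orbit_neq1 Hs). Qed.

Lemma succ2_neq k : k <> s (s k).
Proof. exact/nesym/(orbit_neq2 Hs). Qed.

Lemma not_sun_nbr k i : i <> k -> i <> s k -> ~ sun_nbr k i.
Proof. by move=> ik isk []. Qed.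

Definition on_row (X : I -> lshape) r := forall i, hlo (X i) < hhi (X i) /\ row (X i) = r.
Definition on_col (X : I -> lshape) c := forall i, vlo (X i) < vhi (X i) /\ col (X i) = c.

(* [[ql, qr]] lies inside every horizontal arm; when it is a single column,
   the vertical arms in that column all leave row [r] in the same direction. *)
Record hcore (X : I -> lshape) r ql qr : Prop := HCore {
  hcore_le : ql <= qr;
  hcore_sub : forall i, hlo (X i) <= ql /\ qr <= hhi (X i);
  hcore_coherent : ql = qr -> forall i j,
    vlo (X i) < vhi (X i) -> vlo (X j) < vhi (X j) -> col (X i) = ql -> col (X j) = ql ->
    vlo (X i) = r -> vlo (X j) = r }.

Section OnRow.
Variables (X Y : I -> lshape) (r : Z).
Hypotheses (HS : sun_rep X Y) (HR : on_row X r).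

(* A neighbour of [y_k'] that is not one of [y_k] reaches [y_k'] from row [r]
   and so passes over [y_k]. *)
Lemma vshare_far_y k k' i : k <> k' -> vshare (Y k) (X i) -> vshare (Y k') (X i) ->
  vlo (X i) = r /\ vhi (Y k) <= vlo (Y k') \/ vhi (X i) = r /\ vhi (Y k') <= vlo (Y k) ->
  False.
Proof.
move=> kk' v v' far.
have [j nbr' not_nbr] := sun_nbr_diff (nesym kk').
have [hj rj] := HR j.
case/(sun_yx HS): nbr' => T.
- have [ha hv] : hlo (Y k') < hhi (Y k') /\ vlo (Y k') < vhi (Y k') by lshape_lia.
  have := sun_yc HS ha hv; lshape_lia.
- have hvj : vlo (X j) < vhi (X j) by lshape_lia.
  have := sun_xc HS hj hvj => cj.
  by apply: not_nbr; apply/(sun_yx HS); right; lshape_lia.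
Qed.

Lemma vshare_y_unique k k' i : vshare (Y k) (X i) -> vshare (Y k') (X i) -> k = k'.
Proof.
move=> v v'; apply: NNPP => kk'.
have [hi ri] := HR i.
have hv : vlo (X i) < vhi (X i) by lshape_lia.
have [_ ci] := sun_xc HS hi hv.
have apart : vhi (Y k) <= vlo (Y k') \/ vhi (Y k') <= vlo (Y k).
  by apply: NNPP => C; apply: (sun_yy HS kk'); right; lshape_lia.
case: apart => apart.
- case: ci => ci.
  + by apply: (vshare_far_y kk' v v'); left; lshape_lia.
  + by apply: (vshare_far_y (nesym kk') v' v); right; lshape_lia.
- case: ci => ci.
  + by apply: (vshare_far_y (nesym kk') v' v); left; lshape_lia.
  + by apply: (vshare_far_y kk' v v'); right; lshape_lia.
Qed.

Definition hmeets k := exists i, hshare (Y k) (X i).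

Lemma vshare_of_not_hmeets k i : ~ hmeets k -> sun_nbr k i -> vshare (Y k) (X i).
Proof. by move=> nh /(sun_yx HS) [h|//]; case: nh; exists i. Qed.

Lemma hshare_of_vshare_other k l i : k <> l -> vshare (Y l) (X i) -> sun_nbr k i ->
  hshare (Y k) (X i).
Proof. by move=> kl vl /(sun_yx HS) [//|vk]; case: kl; apply: vshare_y_unique vk vl. Qed.

Lemma hmeets_or_succ k : hmeets k \/ hmeets (s k).
Proof.
apply: NNPP => /Decidable.not_or [nk nsk].
have v : vshare (Y k) (X (s k)) by apply: vshare_of_not_hmeets => //; right.
have v' : vshare (Y (s k)) (X (s k)) by apply: vshare_of_not_hmeets => //; left.
have e := vshare_y_unique v v'.
exact (orbit_neq1 Hs (esym e)).
Qed.

(* [x_i] and [x_j] turn at column [q] on the same side of it, one up and one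
   down; [x_t], on the other side, can only meet one of their vertical arms. *)
Lemma opposite_turns_false q i j t :
  hlo (X i) = q /\ hlo (X j) = q /\ hhi (X t) = q \/
  hhi (X i) = q /\ hhi (X j) = q /\ hlo (X t) = q ->
  vlo (X i) < vhi (X i) -> vlo (X j) < vhi (X j) -> col (X i) = q -> col (X j) = q ->
  vlo (X i) = r -> vhi (X j) = r -> False.
Proof.
move=> ends vi vj ci cj di ej.
have [hi ri] := HR i; have [hj rj] := HR j; have [ht rt] := HR t.
have ti : t <> i by move=> e; rewrite e in ends; lia.
have tj : t <> j by move=> e; rewrite e in ends; lia.
case: (sun_xx HS ti) => Ti; first by lshape_lia.
case: (sun_xx HS tj) => Tj; first by lshape_lia.
have vt : vlo (X t) < vhi (X t) by lshape_lia.
have [_ ct] := sun_xc HS ht vt.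
by lshape_lia.
Qed.

End OnRow.

Section Core.
Variables (X Y : I -> lshape) (r ql qr : Z).
Hypotheses (HS : sun_rep X Y) (HR : on_row X r) (HQ : hcore X r ql qr).

Definition left_of k := hlo (Y k) < hhi (Y k) /\ row (Y k) = r /\ hhi (Y k) <= ql.
Definition right_of k := hlo (Y k) < hhi (Y k) /\ row (Y k) = r /\ qr <= hlo (Y k).

(* A neighbour of [y_k] that is not one of [y_k'] reaches from [y_k] to the
   core and so passes over [y_k']. *)
Lemma hside_far_y k k' : k <> k' ->
  hlo (Y k) < hhi (Y k) -> row (Y k) = r -> hlo (Y k') < hhi (Y k') -> row (Y k') = r ->
  hhi (Y k) <= hlo (Y k') /\ hhi (Y k') <= ql \/ hhi (Y k') <= hlo (Y k) /\ qr <= hlo (Y k') ->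
  False.
Proof.
move=> kk' hk rk hk' rk' far.
have [j nbr not_nbr] := sun_nbr_diff kk'.
have [hj rj] := HR j; have [lj uj] := hcore_sub HQ j; have le := hcore_le HQ.
apply: not_nbr; apply/(sun_yx HS); left.
case/(sun_yx HS): nbr => T; first by lshape_lia.
have vk : vlo (Y k) < vhi (Y k) by lshape_lia.
have vj : vlo (X j) < vhi (X j) by lshape_lia.
have [ck _] := sun_yc HS hk vk; have [cj _] := sun_xc HS hj vj.
by lshape_lia.
Qed.

Lemma hside_apart k k' : k <> k' -> row (Y k) = r -> row (Y k') = r ->
  hlo (Y k) < hhi (Y k) -> hlo (Y k') < hhi (Y k') ->
  hhi (Y k) <= hlo (Y k') \/ hhi (Y k') <= hlo (Y k).
Proof. by move=> kk' *; apply: NNPP => C; apply: (sun_yy HS kk'); left; lshape_lia. Qed.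

Lemma left_of_unique k k' : left_of k -> left_of k' -> k = k'.
Proof.
move=> [hk [rk lk]] [hk' [rk' lk']]; apply: NNPP => kk'.
case: (hside_apart kk' rk rk' hk hk') => apart.
- by apply: (hside_far_y kk' hk rk hk' rk'); left.
- by apply: (hside_far_y (nesym kk') hk' rk' hk rk); left.
Qed.

Lemma right_of_unique k k' : right_of k -> right_of k' -> k = k'.
Proof.
move=> [hk [rk lk]] [hk' [rk' lk']]; apply: NNPP => kk'.
case: (hside_apart kk' rk rk' hk hk') => apart.
- by apply: (hside_far_y (nesym kk') hk' rk' hk rk); right.
- by apply: (hside_far_y kk' hk rk hk' rk'); right.
Qed.

(* Otherwise [y_k] would meet every horizontal arm, [x_(s (s k))] included. *)
Lemma hmeets_side k : hmeets X Y k -> left_of k \/ right_of k.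
Proof.
case=> i hki; apply: NNPP => C.
apply: (sun_nbr_s2 (k := k)); apply/(sun_yx HS); left.
have [hi ri] := HR i; have [hj rj] := HR (s (s k)).
have [li ui] := hcore_sub HQ i; have [lj uj] := hcore_sub HQ (s (s k)).
by move: C; rewrite /left_of /right_of; lshape_lia.
Qed.

Lemma hmeets_two k1 k2 k3 : hmeets X Y k1 -> hmeets X Y k2 -> hmeets X Y k3 ->
  k1 = k2 \/ k1 = k3 \/ k2 = k3.
Proof.
move=> /hmeets_side [a|a] /hmeets_side [b|b] /hmeets_side [c|c].
all: first [ left; by [apply: left_of_unique a b | apply: right_of_unique a b]
           | right; left; by [apply: left_of_unique a c | apply: right_of_unique a c]
           | right; right; by [apply: left_of_unique b c | apply: right_of_unique b c]].
Qed.

Lemma left_right_column k l i j : left_of k -> right_of l ->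
  hshare (Y k) (X i) -> ~ sun_nbr k j -> hshare (Y l) (X j) -> ~ sun_nbr l i ->
  col (X i) = col (X j) -> vlo (X i) < vhi (X i) -> vlo (X j) < vhi (X j) ->
  [/\ ql = qr, col (X i) = ql, col (X i) = hhi (X i) & col (X j) = hlo (X j)].
Proof.
move=> [hk [rk lk]] [hl [rl ul]] hki nkj hlj nli cij vi vj.
have {}nkj : ~ hshare (Y k) (X j) by move=> h; apply/nkj/(sun_yx HS); left.
have {}nli : ~ hshare (Y l) (X i) by move=> h; apply/nli/(sun_yx HS); left.
have [hi ri] := HR i; have [hj rj] := HR j.
have [li ui] := hcore_sub HQ i; have [lj uj] := hcore_sub HQ j.
have [ci _] := sun_xc HS hi vi; have [cj _] := sun_xc HS hj vj.
have le := hcore_le HQ.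
by split; lshape_lia.
Qed.

Lemma ascending_opposite_false i j : ascending (X i) -> ascending (X j) -> ql = qr ->
  col (X i) = ql -> col (X i) = hhi (X i) -> col (X j) = ql -> col (X j) = hlo (X j) ->
  vlo (X i) < vhi (X i) -> vlo (X j) < vhi (X j) -> False.
Proof.
move=> Ai Aj eqq ci ui cj lj vi vj.
have [hi ri] := HR i; have [hj rj] := HR j.
have := Ai hi vi; have := Aj hj vj.
have := hcore_coherent HQ eqq vi vj ci cj.
by lshape_lia.
Qed.

(* Vertical arms leaving the one-column core in the same direction are
   nested, so the [y]'s meeting them would meet both or each other. *)
Lemma core_column_collision k l i j : ql = qr -> col (X i) = ql -> col (X j) = ql ->
  vshare (Y k) (X i) -> vshare (Y l) (X j) -> k <> l -> ~ sun_nbr k j -> ~ sun_nbr l i ->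
  False.
Proof.
move=> eqq ci cj Vki Vlj kl nkj nli.
have vi : vlo (X i) < vhi (X i) by clear -Vki; lshape_lia.
have vj : vlo (X j) < vhi (X j) by clear -Vlj; lshape_lia.
have same_side : vlo (X i) = vlo (X j) \/ vhi (X i) = vhi (X j).
  have [hi ri] := HR i; have [hj rj] := HR j.
  have [_ ei] := sun_xc HS hi vi; have [_ ej] := sun_xc HS hj vj.
  have coh := hcore_coherent HQ eqq.
  have := coh _ _ vi vj ci cj; have := coh _ _ vj vi cj ci.
  by lia.
have nkl : ~ vshare (Y k) (Y l) by move=> h; apply: (sun_yy HS kl); right.
have cij : col (X i) = col (X j) by rewrite ci cj.
case: (vshare_nested Vki Vlj cij same_side nkl) => h.
- by apply: nkj; apply/(sun_yx HS); right.
- by apply: nli; apply/(sun_yx HS); right.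
Qed.

Section FourCycle.
Variables (k0 k1 k2 k3 : I).
Hypotheses (Ek1 : s k0 = k1) (Ek2 : s k1 = k2) (Ek3 : s k2 = k3) (Ek0 : s k3 = k0).
Hypothesis (s3 : forall k, s (s (s k)) <> k).

(* Only [y_k0] and [y_k2] have horizontal contacts; they squeeze [x_k1] and
   [x_k0] into the one-column core, where [y_k1] and [y_k3] collide. *)
Lemma no_sun_row_four_cycle :
  ~ hmeets X Y k1 -> ~ hmeets X Y k3 -> left_of k0 -> right_of k2 -> False.
Proof.
move=> nh1 nh3 l0 r2.
have d01 : k0 <> k1 by rewrite -Ek1; apply: succ_neq.
have d12 : k1 <> k2 by rewrite -Ek2; apply: succ_neq.
have d23 : k2 <> k3 by rewrite -Ek3; apply: succ_neq.
have d02 : k0 <> k2 by rewrite -Ek2 -Ek1; apply: succ2_neq.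
have d13 : k1 <> k3 by rewrite -Ek3 -Ek2; apply: succ2_neq.
have d03 : k0 <> k3 by rewrite -Ek3 -Ek2 -Ek1; apply/nesym/s3.
have V11 : vshare (Y k1) (X k1) by apply: (vshare_of_not_hmeets HS nh1); left.
have V12 : vshare (Y k1) (X k2) by apply: (vshare_of_not_hmeets HS nh1); right.
have V33 : vshare (Y k3) (X k3) by apply: (vshare_of_not_hmeets HS nh3); left.
have V30 : vshare (Y k3) (X k0) by apply: (vshare_of_not_hmeets HS nh3); right.
have H00 : hshare (Y k0) (X k0) by apply: (hshare_of_vshare_other HS HR d03 V30); left.
have H01 : hshare (Y k0) (X k1) by apply: (hshare_of_vshare_other HS HR d01 V11); right.
have H22 : hshare (Y k2) (X k2) by apply: (hshare_of_vshare_other HS HR (nesym d12) V12); left.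
have H23 : hshare (Y k2) (X k3) by apply: (hshare_of_vshare_other HS HR d23 V33); right.
have n02 : ~ sun_nbr k0 k2 by apply: not_sun_nbr; rewrite ?Ek1 //; apply/nesym.
have n03 : ~ sun_nbr k0 k3 by apply: not_sun_nbr; rewrite ?Ek1 //; apply/nesym.
have n20 : ~ sun_nbr k2 k0 by apply: not_sun_nbr; rewrite ?Ek3.
have n21 : ~ sun_nbr k2 k1 by apply: not_sun_nbr; rewrite ?Ek3.
have c12 : col (X k1) = col (X k2) by clear -V11 V12; lshape_lia.
have c03 : col (X k0) = col (X k3) by clear -V30 V33; lshape_lia.
have v1 : vlo (X k1) < vhi (X k1) by clear -V11; lshape_lia.
have v0 : vlo (X k0) < vhi (X k0) by clear -V30; lshape_lia.
have v2 : vlo (X k2) < vhi (X k2) by clear -V12; lshape_lia.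
have v3 : vlo (X k3) < vhi (X k3) by clear -V33; lshape_lia.
have [eqq col1 _ _] := left_right_column l0 r2 H01 n02 H22 n21 c12 v1 v2.
have [_ col0 _ _] := left_right_column l0 r2 H00 n03 H23 n20 c03 v0 v3.
have n10 : ~ sun_nbr k1 k0 by apply: not_sun_nbr; rewrite ?Ek2.
have n31 : ~ sun_nbr k3 k1 by apply: not_sun_nbr; rewrite ?Ek0 //; apply/nesym.
exact: core_column_collision eqq col1 col0 V11 V30 d13 n10 n31.
Qed.

End FourCycle.

Lemma no_sun_row_long : (forall k, s (s (s k)) <> k) -> I -> False.
Proof.
move=> s3 i0.
have [m hm] : exists m, hmeets X Y m by case: (hmeets_or_succ HS HR i0); eexists; eauto.
have d02 := @succ2_neq m.
case: (classic (hmeets X Y (s m))) => [h1 | nh1].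
  case: (hmeets_or_succ HS HR (s (s m))) => h2; case: (hmeets_two hm h1 h2).
  - exact: succ_neq.
  - by case=> [/succ2_neq | /succ_neq].
  - exact: succ_neq.
  - by case=> [/esym /s3 | /succ2_neq].
have h2 : hmeets X Y (s (s m)) by case: (hmeets_or_succ HS HR (s m)).
have nh3 : ~ hmeets X Y (s (s (s m))).
  by move=> h3; case: (hmeets_two hm h2 h3) => [/d02 | [/esym /s3 | /succ_neq]].
have h4 : hmeets X Y (s (s (s (s m)))) by case: (hmeets_or_succ HS HR (s (s (s m)))).
have e4 : s (s (s (s m))) = m.
  case: (hmeets_two hm h2 h4) => [/d02 // | [// | /(orbit_inj Hs) /(orbit_inj Hs) e]].
  by case: (d02 e).
case: (hmeets_side hm) => [lm | rm]; case: (hmeets_side h2) => [l2 | r2].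
- exact: d02 (left_of_unique lm l2).
- exact (@no_sun_row_four_cycle m _ _ _ erefl erefl erefl e4 s3 nh1 nh3 lm r2).
- exact (@no_sun_row_four_cycle (s (s m)) _ m _ erefl e4 erefl erefl s3 nh3 nh1 l2 rm).
- exact: d02 (right_of_unique rm r2).
Qed.

Lemma no_sun_row_three : (forall k, s (s (s k)) = k) -> (forall i, ascending (X i)) ->
  I -> False.
Proof.
move=> s3 HA i0.
have [m nhm] : exists m, ~ hmeets X Y m.
  apply: NNPP => C.
  have hm k : hmeets X Y k by apply: NNPP => h; apply: C; exists k.
  by case: (hmeets_two (hm i0) (hm (s i0)) (hm (s (s i0)))) => [|[|]]; 
    [apply: succ_neq | apply: succ2_neq | apply: succ_neq].
have h1 : hmeets X Y (s m) by case: (hmeets_or_succ HS HR m).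
have h2 : hmeets X Y (s (s m)) by case: (hmeets_or_succ HS HR (s (s m))); rewrite ?s3.
have V00 : vshare (Y m) (X m) by apply: (vshare_of_not_hmeets HS nhm); left.
have V01 : vshare (Y m) (X (s m)) by apply: (vshare_of_not_hmeets HS nhm); right.
have H11 : hshare (Y (s m)) (X (s m)).
  by apply: (hshare_of_vshare_other HS HR (nesym (@succ_neq m)) V01); left.
have H20 : hshare (Y (s (s m))) (X m).
  by apply: (hshare_of_vshare_other HS HR (nesym (@succ2_neq m)) V00); right; rewrite s3.
have n10 : ~ sun_nbr (s m) m by apply: not_sun_nbr; [apply: succ_neq | apply: succ2_neq].
have n21 : ~ sun_nbr (s (s m)) (s m).
  by apply: not_sun_nbr; [apply: succ_neq | rewrite s3; apply/nesym/succ_neq].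
have c01 : col (X m) = col (X (s m)) by clear -V00 V01; lshape_lia.
have v0 : vlo (X m) < vhi (X m) by clear -V00; lshape_lia.
have v1 : vlo (X (s m)) < vhi (X (s m)) by clear -V01; lshape_lia.
case: (hmeets_side h1) => [l1 | r1]; case: (hmeets_side h2) => [l2 | r2].
- exact: @succ_neq (s m) (left_of_unique l1 l2).
- have [eqq c1 u1 l0] := left_right_column l1 r2 H11 n10 H20 n21 (esym c01) v1 v0.
  by apply: (ascending_opposite_false (HA _) (HA _) eqq c1 u1 _ l0 v1 v0); rewrite c01.
- have [eqq c0 u0 l1'] := left_right_column l2 r1 H20 n21 H11 n10 c01 v0 v1.
  by apply: (ascending_opposite_false (HA _) (HA _) eqq c0 u0 _ l1' v0 v1); rewrite -c01.
- exact: @succ_neq (s m) (right_of_unique r1 r2).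
Qed.

End Core.
End SunShapes.

Lemma exists_argmax (I : finType) (f : I -> Z) : I -> exists i, forall j, f j <= f i.
Proof.
move=> i0.
suff [i max_i] : exists i, forall j, j \in enum I -> f j <= f i.
  by exists i => j; apply: max_i; rewrite mem_enum.
elim: (enum I) => [|x l [i IH]]; first by exists i0.
have [le | gt] := Z.le_gt_cases (f x) (f i).
- by exists i => j; rewrite inE => /orP [/eqP -> // | /IH].
- by exists x => j; rewrite inE => /orP [/eqP -> | /IH]; lia.
Qed.

Section FiniteSun.
Variables (I : finType) (s : I -> I).
Hypothesis Hs : long_orbits s.

Lemma row_or_col X Y : sun_rep s X Y -> I -> (exists r, on_row X r) \/ (exists c, on_col X c).
Proof.
move=> HS i0.
case: (classic (forall i j, i <> j -> hshare (X i) (X j))) => [allh | not_allh].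
  left; exists (row (X i0)) => i.
  case: (classic (i = i0)) => [-> | ne]; last by have := allh i i0 ne; lshape_lia.
  by have := allh i0 (s i0) (@succ_neq _ _ Hs i0); lshape_lia.
have [i [j [ij nhij]]] : exists i j, i <> j /\ ~ hshare (X i) (X j).
  by apply: NNPP => C; apply: not_allh => i j ij; apply: NNPP => h; apply: C; exists i, j.
have vij : vshare (X i) (X j) by case: (sun_xx HS ij).
pose on_c t := vlo (X t) < vhi (X t) /\ col (X t) = col (X i).
case: (classic (forall t, on_c t)) => [all_on | /not_all_ex_not [m off_m]].
  by right; exists (col (X i)).
have off_c t u : ~ on_c t -> on_c u -> hshare (X t) (X u).
  move=> off on; have tu : t <> u by move=> e; move: on; rewrite -e; exact off.
  case: (sun_xx HS tu) => // T; exfalso; apply off.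
  by move: on; rewrite /on_c; lshape_lia.
have on_i : on_c i by rewrite /on_c; lshape_lia.
have hmi := off_c _ _ off_m on_i.
left; exists (row (X m)) => t.
case: (classic (on_c t)) => [on_t | off_t].
- by have := off_c _ _ off_m on_t; lshape_lia.
- by have := off_c _ _ off_t on_i; lshape_lia.
Qed.

Lemma hcore_exists X Y r : sun_rep s X Y -> on_row X r -> I -> exists ql qr, hcore X r ql qr.
Proof.
move=> HS HR i0.
have [iM max_lo] := exists_argmax (fun i => hlo (X i)) i0.
have [im min_hi] := exists_argmax (fun i => - hhi (X i)) i0.
rewrite /= in max_lo min_hi.
have [hM rM] := HR iM; have [hm rm] := HR im.
exists (hlo (X iM)), (hhi (X im)); split.
- apply: NNPP => C.
  have ne : iM <> im by move=> e; rewrite e in C; lia.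
  case: (sun_xx HS ne) => T; first by lshape_lia.
  have [vM vm] : vlo (X iM) < vhi (X iM) /\ vlo (X im) < vhi (X im) by lshape_lia.
  have [cM _] := sun_xc HS hM vM; have [cm _] := sun_xc HS hm vm.
  by lshape_lia.
- by move=> i; have := max_lo i; have := min_hi i; lia.
- move=> eqq i j vi vj ci cj di; apply: NNPP => dj.
  have [hi ri] := HR i; have [hj rj] := HR j.
  have [ci' _] := sun_xc HS hi vi; have [cj' ej] := sun_xc HS hj vj.
  have {}ej : vhi (X j) = r by lia.
  have ij : i <> j by move=> e; rewrite e in di; lia.
  case: (sun_xx HS ij) => [hij | ]; last by lshape_lia.
  have := max_lo i; have := max_lo j; have := min_hi i; have := min_hi j.
  move=> *; have [ends | ends] : hlo (X i) = hlo (X iM) /\ hlo (X j) = hlo (X iM) \/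
      hhi (X i) = hlo (X iM) /\ hhi (X j) = hlo (X iM) by lshape_lia.
  + by apply: (opposite_turns_false HS HR (t := im) _ vi vj ci cj di ej); left; lia.
  + by apply: (opposite_turns_false HS HR (t := iM) _ vi vj ci cj di ej); right; lia.
Qed.

Lemma no_sun_row X Y r : sun_rep s X Y -> on_row X r -> I ->
  (forall k, s (s (s k)) <> k) \/ ((forall k, s (s (s k)) = k) /\ forall i, ascending (X i)) ->
  False.
Proof.
move=> HS HR i0 orbits.
have [ql [qr HQ]] := hcore_exists HS HR i0.
case: orbits => [s3 | [s3 HA]].
- exact (no_sun_row_long Hs HS HR HQ s3 i0).
- exact (no_sun_row_three Hs HS HR HQ s3 HA i0).
Qed.

Theorem no_lshape_sun X Y : sun_rep s X Y -> I ->
  (forall k, s (s (s k)) <> k) \/ ((forall k, s (s (s k)) = k) /\ forall i, ascending (X i)) ->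
  False.
Proof.
move=> HS i0 orbits.
case: (row_or_col HS i0) => [[r HR] | [c HC]]; first exact: no_sun_row HS HR i0 orbits.
apply: (no_sun_row (sun_rep_transpose HS) (r := c) _ i0).
- by move=> i; have [? ?] := HC i.
- by case: orbits => [? | [? HA]]; [left | right; split => // i; apply/ascending_transpose].
Qed.

End FiniteSun.

Close Scope Z_scope.

(** * From grid paths to L-shapes *)

(* The first branch is the path running horizontally from [p] to the corner
   [k] and then vertically to [q]; the second one is the transposed case. *)
Definition lshape_of (p k q : point) : lshape :=
  let z := Z.of_nat in
  if (p.2 == k.2) && (k.1 == q.1) then
    LShape (z k.2) (z (minn p.1 k.1)) (z (maxn p.1 k.1)) (z k.1) (z (minn k.2 q.2)) (z (maxn k.2 q.2))
  else
    LShape (z k.2) (z (minn k.1 q.1)) (z (maxn k.1 q.1)) (z k.1) (z (minn p.2 k.2)) (z (maxn p.2 k.2)).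

Lemma lshape_of_spec (p k q : point) :
  (p.2 = k.2 /\ k.1 = q.1) \/ (p.1 = k.1 /\ k.2 = q.2) ->
  let P := lshape_of p k q in
  [/\ forall x y, hseg p k x y \/ hseg k q x y <->
        (Z.of_nat y = row P /\ hlo P <= Z.of_nat x < hhi P)%Z,
      forall x y, vseg p k x y \/ vseg k q x y <->
        (Z.of_nat x = col P /\ vlo P <= Z.of_nat y < vhi P)%Z,
      cornered P,
      k = q -> ~ (hlo P < hhi P /\ vlo P < vhi P)%Z
    & p.1 <= k.1 -> p.2 <= k.2 -> k.1 <= q.1 -> k.2 <= q.2 -> ascending P].
Proof.
case: p k q => [a b] [c d] [e f]; rewrite /lshape_of /hseg /vseg /cornered /ascending /=.
case: (b =P d) => bd; case: (c =P e) => ce /= shape.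
all: split; [move=> x y; lia | move=> x y; lia | lia | case=> ? ?; lia | lia].
Qed.

Record represents (s : seq point) (P : lshape) : Prop := Represents {
  represents_h : forall x y, (true, x, y) \in edge_keys s <->
    (Z.of_nat y = row P /\ hlo P <= Z.of_nat x < hhi P)%Z;
  represents_v : forall x y, (false, x, y) \in edge_keys s <->
    (Z.of_nat x = col P /\ vlo P <= Z.of_nat y < vhi P)%Z;
  represents_nonneg : (0 <= row P /\ 0 <= hlo P /\ 0 <= col P /\ 0 <= vlo P)%Z }.

Lemma path_lshape s : grid_path s -> bends s <= 1 -> exists P,
  [/\ represents s P, cornered P, bends s = 0 -> ascending P & monotonic s -> ascending P].
Proof.
case: s => [|p s] gp hb.
  exists (LShape 0 0 0 0 0 0); split; rewrite /cornered /ascending /=; try lia.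
  by split => [x y | x y |] /=; rewrite ?in_nil; lia.
have [k L] := lpath_exists gp hb.
have [hs vs cP straight asc] := lshape_of_spec (lpath_shape L).
exists (lshape_of p k (last p s)); split => //.
- split=> [x y | x y |]; first by rewrite (lpath_hkeys L) hs.
    by rewrite (lpath_vkeys L) vs.
  by rewrite /lshape_of; case: ifP => _ /=; lia.
- by move=> /(lpath_straight L) /straight nboth hP vP; case: nboth.
- by case/(lpath_monotonic L); apply: asc.
Qed.

Lemma share_edge_lshare s t P Q : sorted grid_adj s -> sorted grid_adj t ->
  represents s P -> represents t Q -> share_edge s t <-> lshare P Q.
Proof.
move=> ss st [hs vs ns] [ht vt nt]; rewrite share_edge_keys //; split.
- case/hasP => [[[b x] y]] in1 in2.
  case: b in1 in2 => in1 in2.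
  + by left; move: (proj1 (hs x y) in1) (proj1 (ht x y) in2); rewrite /hshare; lia.
  + by right; move: (proj1 (vs x y) in1) (proj1 (vt x y) in2); rewrite /vshare; lia.
- case=> [H|H]; apply/hasP.
  + exists (true, Z.to_nat (Z.max (hlo P) (hlo Q)), Z.to_nat (row P)).
      by apply/(hs _ _); move: H; rewrite /hshare; lia.
    by apply/(ht _ _); move: H; rewrite /hshare; lia.
  + exists (false, Z.to_nat (col P), Z.to_nat (Z.max (vlo P) (vlo Q))).
      by apply/(vs _ _); move: H; rewrite /vshare; lia.
    by apply/(vt _ _); move: H; rewrite /vshare; lia.
Qed.

Lemma ordS_val n (k : 'I_n) : nat_of_ord (ordS k) = if k.+1 == n then 0 else k.+1.
Proof.
rewrite /=; have kn := ltn_ord k.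
by case: eqP => [->|/eqP ne]; [rewrite modnn | rewrite modn_small //; lia].
Qed.

Lemma ordS_long_orbits n : 2 < n -> long_orbits (@ordS n).
Proof.
move=> n_gt2; split; first exact: ordS_inj.
- move=> k /(congr1 (@nat_of_ord n)); rewrite ordS_val; have := ltn_ord k; case: ifP; lia.
- move=> k /(congr1 (@nat_of_ord n)); rewrite !ordS_val; have := ltn_ord k.
  by case: ifP; case: ifP; lia.
Qed.

Lemma ordS3_neq n (k : 'I_n) : 3 < n -> ordS (ordS (ordS k)) <> k.
Proof.
move=> n_gt3 /(congr1 (@nat_of_ord n)); rewrite !ordS_val; have := ltn_ord k.
by case: ifP; case: ifP; case: ifP; lia.
Qed.

Lemma ordS3_eq (k : 'I_3) : ordS (ordS (ordS k)) = k.
Proof.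
apply: ord_inj; rewrite !ordS_val; have := ltn_ord k.
by case: ifP; case: ifP; case: ifP; lia.
Qed.

Lemma sun_rep_of_epg n (P : 'I_n + 'I_n -> seq point) :
  EPG_rep (sun_adj n) P -> (forall v, bends (P v) <= 1) ->
  exists X Y, sun_rep (@ordS n) X Y /\
    (forall i, bends (P (inl i)) = 0 \/ monotonic (P (inl i)) -> ascending (X i)).
Proof.
move=> [gp adjE] hb.
have ex v := path_lshape (gp v) (hb v).
pose F v := proj1_sig (constructive_indefinite_description _ (ex v)).
have HF v : [/\ represents (P v) (F v), cornered (F v),
    bends (P v) = 0 -> ascending (F v) & monotonic (P v) -> ascending (F v)].
  exact: proj2_sig (constructive_indefinite_description _ (ex v)).
have adjF u v : u != v -> (sun_adj n u v <-> lshare (F u) (F v)).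
  move=> uv; rewrite (adjE u v uv).
  case/andP: (gp u) (gp v) => su _ /andP [sv _].
  by have [ru _ _ _] := HF u; have [rv _ _ _] := HF v; apply: share_edge_lshare.
exists (fun i => F (inl i)), (fun k => F (inr k)).
split; last by move=> i; case: (HF (inl i)) => _ _ str mon [/str | /mon].
split => [i j ij | k i | k l kl | i | k].
- by apply/(adjF (inl i) (inl j)) => /=; apply/eqP; congruence.
- rewrite -(adjF (inr k) (inl i)) //= /sun_nbr.
  by split => [/orP [] /eqP e | [] ->]; [left | right | rewrite eqxx | rewrite eqxx orbT];
    try apply: val_inj.
- by rewrite -(adjF (inr k) (inr l)) //=; apply/eqP; congruence.
- by case: (HF (inl i)).
- by case: (HF (inr k)).
Qed.

(** * Staircase representations *)

Definition step (p : point) (m : bool) : point := if m then (p.1.+1, p.2) else (p.1, p.2.+1).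

Fixpoint walk (p : point) (ms : seq bool) : seq point :=
  p :: if ms is m :: ms' then walk (step p m) ms' else [::].

Fixpoint walk_steps (p : point) (ms : seq bool) : seq (point * bool) :=
  if ms is m :: ms' then (p, m) :: walk_steps (step p m) ms' else [::].

Fixpoint turns (ms : seq bool) : nat :=
  if ms is m :: ((m' :: _) as ms') then (m != m') + turns ms' else 0.

Lemma walk_cons p m ms : walk p (m :: ms) = p :: walk (step p m) ms.
Proof. by []. Qed.

Lemma walk_head p ms : walk p ms = p :: behead (walk p ms).
Proof. by case: ms. Qed.

Lemma mem_walk_ge p ms z : z \in walk p ms -> p.1 <= z.1 /\ p.2 <= z.2.
Proof.
elim: ms p => [|m ms IH] p; first by rewrite /= inE => /eqP ->.
by rewrite walk_cons inE => /orP [/eqP -> // | /IH]; case: m; case: p => a b /=; lia.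
Qed.

Lemma walk_grid_path p ms : grid_path (walk p ms).
Proof.
apply/andP; split.
- rewrite walk_head /=; elim: ms p => [|m ms IH] p //=.
  rewrite [walk (step p m) ms]walk_head /= IH andbT.
  by apply/grid_adjP; case: m; case: p => a b /=; lia.
- elim: ms p => [|m ms IH] p //=.
  rewrite IH andbT; apply/negP => /mem_walk_ge.
  by case: m; case: p => a b /=; lia.
Qed.

Lemma walk_monotonic p ms : monotonic (walk p ms).
Proof.
rewrite /monotonic walk_head /=; elim: ms p => [|m ms IH] p //=.
rewrite [walk (step p m) ms]walk_head /= IH andbT.
by case: m; rewrite /step eqxx ?orbT.
Qed.

Lemma bends_walk p ms : bends (walk p ms) = turns ms.
Proof.
have horiz_step q m : horiz q (step q m) = m by case: m; rewrite /horiz /step /=; lia.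
elim: ms p => [|m [|m' ms] IH] p //.
by have := IH (step p m); rewrite !walk_cons [walk _ ms]walk_head /= => ->; rewrite !horiz_step.
Qed.

Lemma path_edges_walk p ms :
  path_edges (walk p ms) = [seq (e.1, step e.1 e.2) | e <- walk_steps p ms].
Proof.
elim: ms p => [|m ms IH] p //.
by rewrite walk_cons walk_head /path_edges /= -IH /path_edges walk_head.
Qed.

Lemma share_edge_walk p ms p' ms' : share_edge (walk p ms) (walk p' ms') <->
  exists u m, (u, m) \in walk_steps p ms /\ (u, m) \in walk_steps p' ms'.
Proof.
have same_step u m v m' : same_edge (u, step u m) (v, step v m') = ((u, m) == (v, m')).
  by case: u v => a b [c d]; case: m; case: m'; rewrite /same_edge /step /= !xpair_eqE /=; lia.
rewrite /share_edge !path_edges_walk; split.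
- case/hasP => _ /mapP [[u m] H1 ->] /hasP [_ /mapP [[v m'] H2 ->]].
  rewrite same_step => /eqP [eu em]; subst.
  by exists v, m'.
- case=> u [m [H1 H2]]; apply/hasP; exists (u, step u m); first by apply/mapP; exists (u, m).
  by apply/hasP; exists (u, step u m); [apply/mapP; exists (u, m) | rewrite same_step].
Qed.

Definition shift (p : point) (m : bool) (t : nat) : point :=
  if m then (p.1 + t, p.2) else (p.1, p.2 + t).

Definition on_run (p : point) (m : bool) (a : nat) (u : point) : Prop :=
  if m then u.2 = p.2 /\ p.1 <= u.1 < p.1 + a else u.1 = p.1 /\ p.2 <= u.2 < p.2 + a.

Lemma mem_walk_steps_run p a m ms u m' :
  (u, m') \in walk_steps p (nseq a m ++ ms) <->
  (m' = m /\ on_run p m a u) \/ (u, m') \in walk_steps (shift p m a) ms.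
Proof.
elim: a p => [|a IH] p.
  rewrite (_ : shift p m 0 = p); last by case: (m); case: p => x y; rewrite /shift /= addn0.
  by rewrite /on_run; split; [right | case=> [[_]|//]; case: (m); lia].
rewrite /= inE (_ : shift p m a.+1 = shift (step p m) m a); last first.
  by case: (m); case: p => x y; rewrite /shift /step /=; congr pair; lia.
split.
- case/orP => [/eqP [-> ->] | /(proj1 (IH (step p m))) [[-> run] | later]];
    [left | left | by right].
  + by split => //; case: (m); case: p => x y; rewrite /on_run /=; lia.
  + by split => //; move: run; case: (m); case: p => x y; rewrite /on_run /step /=; lia.
- case=> [[em run] | later]; last by apply/orP; right; apply/(proj2 (IH (step p m))); right.
  subst m'; case: (eqVneq u p) => [-> | up]; first by rewrite eqxx.
  apply/orP; right; apply/(proj2 (IH (step p m))); left; split => //.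
  by move: run up; case: (m); case: (p) => x y; case: (u) => c d;
    rewrite /on_run /step /= xpair_eqE; lia.
Qed.

Definition staircase (a b c : nat) : seq bool := nseq a false ++ nseq b true ++ nseq c false.

Lemma mem_staircase_steps p a b c u m :
  (u, m) \in walk_steps p (staircase a b c) <->
  m = false /\ u.1 = p.1 /\ p.2 <= u.2 < p.2 + a \/
  m = true /\ u.2 = p.2 + a /\ p.1 <= u.1 < p.1 + b \/
  m = false /\ u.1 = p.1 + b /\ p.2 + a <= u.2 < p.2 + a + c.
Proof.
rewrite /staircase -[nseq c false]cats0 !mem_walk_steps_run /shift /on_run /= in_nil.
by case: u => x y /=; case: m; split; lia.
Qed.

Lemma turns_nseq a m s :
  turns (nseq a.+1 m ++ s) = (if s is m' :: _ then (m != m') : nat else 0) + turns s.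
Proof.
elim: a => [|a IH]; first by case: s.
transitivity ((m != m) + turns (nseq a.+1 m ++ s)); first by [].
by rewrite eqxx IH.
Qed.

Lemma turns_staircase a b c : 0 < a -> 0 < b -> 0 < c -> turns (staircase a b c) = 2.
Proof.
case: a b c => [|a] [|b] [|c] // _ _ _.
by rewrite /staircase turns_nseq turns_nseq -[nseq c.+1 false]cats0 turns_nseq.
Qed.

Lemma share_edgeC s t : share_edge s t = share_edge t s.
Proof.
have same_edgeC e f : same_edge e f = same_edge f e.
  by rewrite /same_edge ![f.1 == _]eq_sym ![f.2 == _]eq_sym [(e.2 == f.1) && _]andbC.
apply/hasP/hasP => -[e He /hasP [f Hf ef]]; exists f => //; apply/hasP; exists e => //;
  by rewrite same_edgeC.
Qed.

(* [x_i] climbs column [i] to row [n + 1], runs right to column [i + n] and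
   steps up once more; [y_k] shares the edge at row [k] of the vertical arm of
   [x_(k+1 mod n)], runs right along row [k + 1], below every horizontal arm
   of an [x], to column [n + k], and climbs to row [n + 2] over the last edge
   of [x_k]. *)
Definition sun_walk n (v : 'I_n + 'I_n) : seq point :=
  match v with
  | inl i => walk (i : nat, 0) (staircase n.+1 n 1)
  | inr k => walk (k.+1 %% n, k : nat) (staircase 1 (n + k - k.+1 %% n) (n.+1 - k))
  end.

Lemma succ_mod_spec n (k : 'I_n) :
  k.+1 %% n = k.+1 /\ k.+1 < n \/ k.+1 %% n = 0 /\ k.+1 = n.
Proof. by have := ordS_val k; have := ltn_ord k; rewrite /=; case: ifP => /eqP; lia. Qed.

Lemma sun_walk_xx n (i j : 'I_n) : share_edge (sun_walk (inl i)) (sun_walk (inl j)).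
Proof.
apply/share_edge_walk; exists (n.-1, n.+1), true.
by have := ltn_ord i; have := ltn_ord j; split; apply/mem_staircase_steps => /=; lia.
Qed.

Lemma sun_walk_yx n (k i : 'I_n) :
  share_edge (sun_walk (inr k)) (sun_walk (inl i)) = sun_adj n (inr k) (inl i).
Proof.
have := succ_mod_spec k; have := ltn_ord i; have := ltn_ord k => lt_k lt_i j_spec.
have -> : sun_adj n (inr k) (inl i) = (nat_of_ord i == k) || (nat_of_ord i == k.+1 %% n) by [].
apply/idP/idP => [/share_edge_walk [u [m []]] | /orP [] /eqP eq_i].
- by rewrite !mem_staircase_steps /=; case: u => x y /= Hy Hx; apply/orP; lia.
- by apply/share_edge_walk; exists (n + k, n.+1), false; rewrite !mem_staircase_steps /=; lia.
- by apply/share_edge_walk; exists (k.+1 %% n, nat_of_ord k), false;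
    rewrite !mem_staircase_steps /=; lia.
Qed.

Lemma sun_walk_yy n (k l : 'I_n) : k != l -> ~~ share_edge (sun_walk (inr k)) (sun_walk (inr l)).
Proof.
move=> kl; have {}kl : nat_of_ord k != l := kl.
apply/negP => /share_edge_walk [[x y] [m []]]; rewrite !mem_staircase_steps /=.
have := ltn_ord k; have := ltn_ord l.
by case: (succ_mod_spec k) => [[-> ?] | [-> ?]]; case: (succ_mod_spec l) => [[-> ?] | [-> ?]];
  case: m; lia.
Qed.

Theorem sun_in_Bm2 n : 2 < n -> in_Bm 2 (sun_adj n).
Proof.
move=> n_gt2; exists (@sun_walk n); split.
  split=> [[i|k] | [i|k] [j|l] uv]; rewrite ?walk_grid_path //=.
  - by rewrite sun_walk_xx; apply: contraNneq uv => ->.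
  - by rewrite share_edgeC sun_walk_yx.
  - by rewrite sun_walk_yx.
  - by rewrite (negbTE (sun_walk_yy _)) //; apply: contra uv => /eqP ->.
case=> [i|k]; rewrite walk_monotonic bends_walk turns_staircase //; try lia.
by have := succ_mod_spec k; lia.
Qed.

(** * Bend numbers of suns *)

(* [x_0] and [x_1] are mirror-image L's sharing their vertical arm, [x_2] is
   the straight bar carrying both horizontal arms, and every [y] is a single
   unit edge. *)
Definition sun3_path (v : 'I_3 + 'I_3) : seq point :=
  match v with
  | inl i => nth [::] [:: [:: (0,1); (1,1); (2,1); (3,1); (3,2); (3,3); (3,4)];
                         [:: (6,1); (5,1); (4,1); (3,1); (3,2); (3,3); (3,4)];
                         [:: (0,1); (1,1); (2,1); (3,1); (4,1); (5,1); (6,1)]] i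
  | inr k => nth [::] [:: [:: (3,3); (3,4)]; [:: (5,1); (6,1)]; [:: (0,1); (1,1)]] k
  end.

Lemma sun3_in_B1 : in_B 1 (sun_adj 3).
Proof.
exists sun3_path; split; [split|].
- by case=> [[[|[|[|i]]] Hi]|[[|[|[|i]]] Hi]] //; vm_compute.
- by move=> [[[|[|[|i]]] Hi]|[[|[|[|i]]] Hi]] [[[|[|[|j]]] Hj]|[[|[|[|j]]] Hj]] //;
    vm_compute.
- by case=> [[[|[|[|i]]] Hi]|[[|[|[|i]]] Hi]] //; vm_compute.
Qed.

Lemma sun_notin_B1 n : 3 < n -> ~ in_B 1 (sun_adj n).
Proof.
move=> n_gt3 [P [rep hb]].
have [X [Y [HS _]]] := sun_rep_of_epg rep hb.
have i0 : 'I_n := Ordinal (ltn_trans (isT : 0 < 3) n_gt3).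
apply: (no_lshape_sun (ordS_long_orbits (ltnW n_gt3)) HS i0).
by left => k; apply: ordS3_neq.
Qed.

Lemma sun3_rep_false (P : 'I_3 + 'I_3 -> seq point) :
  EPG_rep (sun_adj 3) P -> (forall v, bends (P v) <= 1) ->
  (forall i, bends (P (inl i)) = 0 \/ monotonic (P (inl i))) -> False.
Proof.
move=> rep hb straight_or_mono.
have [X [Y [HS HA]]] := sun_rep_of_epg rep hb.
apply: (no_lshape_sun (ordS_long_orbits (isT : 2 < 3)) HS ord0).
by right; split => [k | i]; [apply: ordS3_eq | apply/HA/straight_or_mono].
Qed.

Lemma in_B_mono k k' (V : finType) (adj : rel V) : k <= k' -> in_B k adj -> in_B k' adj.
Proof. by move=> le [P [rep hb]]; exists P; split => // v; apply: leq_trans (hb v) le. Qed.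

Lemma in_Bm_mono k k' (V : finType) (adj : rel V) : k <= k' -> in_Bm k adj -> in_Bm k' adj.
Proof.
move=> le [P [rep hb]]; exists P; split => // v.
by have [b m] := hb v; split => //; apply: leq_trans b le.
Qed.

Lemma in_Bm_in_B k (V : finType) (adj : rel V) : in_Bm k adj -> in_B k adj.
Proof. by move=> [P [rep hb]]; exists P; split => // v; case: (hb v). Qed.

Theorem corollary3p9 :
  bend_number (sun_adj 3) 1 /\
  (forall n : nat, 4 <= n -> bend_number (sun_adj n) 2) /\
  (forall n : nat, 3 <= n -> mono_bend_number (sun_adj n) 2).
Proof.
split; [|split].
- split; first exact: sun3_in_B1.
  case=> // _ [P [rep hb]].
  apply: (sun3_rep_false rep) => [v | i]; first exact: leq_trans (hb v) _.
  by left; apply/eqP; rewrite -leqn0.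
- move=> n n_ge4; split; first by apply/in_Bm_in_B/sun_in_Bm2; lia.
  move=> j j_lt2 Bj; apply: (sun_notin_B1 n_ge4).
  exact: in_B_mono (j_lt2 : j <= 1) Bj.
- move=> n n_ge3; split; first by apply: sun_in_Bm2; lia.
  move=> j j_lt2 Bj; have [P [rep hb]] := in_Bm_mono (j_lt2 : j <= 1) Bj.
  have [n_gt3 | n3] : 3 < n \/ n = 3 by lia.
  + by apply: (sun_notin_B1 n_gt3); apply: in_Bm_in_B; exists P.
  + subst n; apply: (sun3_rep_false rep) => [v | i]; first by case: (hb v).
    by right; case: (hb (inl i)).
Qed.
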